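(* Consider the two-level PFASST iteration for a linear problem with Gauss–Radau nodes and $L$ time steps as described in the context. Then PFASST converges if the CFL number $\mu$ is small enough. More precisely, there exist a fixed value $\mu^*_0>0$ and a constant $c>0$ independent of $\mu$ such that for all $0<\mu<\mu^*_0$, $$\rho\big(\mathbf{T}_{\mathrm{PFASST}}(\mu)\big)\le c\,\mu^{1/L},$$ where $\rho$ denotes the spectral radius.
   Context: Fix positive integers $L$ (time steps), $M$ (collocation nodes), $N$ (spatial degrees of freedom). Let $0<\tau_1<\dots<\tau_M=1$ be the (right) Gauss–Radau nodes on $[0,1]$, $\ell_j$ the Lagrange basis polynomials, $\mathbf{Q}=(q_{m,j})\in\mathbb{R}^{M\times M}$ with $q_{m,j}=\int_0^{\tau_m}\ell_j(s)\,ds$. Let $\mathbf{Q}_\Delta\in\mathbb{R}^{M\times M}$ be the lower-triangular weight matrix of a simpler quadrature rule. Let $\mathbf{A}\in\mathbb{C}^{N\times N}$ and $\mu>0$. Let $\mathbf{N}_M\in\mathbb{R}^{M\times M}$ have ones in its last column and zeros elsewhere, $\mathbf{H}=\mathbf{N}_M\otimes\mathbf{I}_N$, and $\mathbf{E}\in\mathbb{R}^{L\times L}$ with ones on the first subdiagonal and zeros elsewhere. Composite collocation matrix: $\mathbf{C}=\mathbf{I}_{LMN}-\mu\,\mathbf{I}_L\otimes\mathbf{Q}\otimes\mathbf{A}-\mathbf{E}\otimes\mathbf{H}$. Fine preconditioner: $\hat{\mathbf{P}}=\mathbf{I}_{LMN}-\mu\,\mathbf{I}_L\otimes\mathbf{Q}_\Delta\otimes\mathbf{A}$.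 Coarse level: integers $\tilde M\le M$, $\tilde N\le N$, $\tilde{\mathbf{Q}}_\Delta\in\mathbb{R}^{\tilde M\times\tilde M}$ lower triangular (simpler quadrature rule on the $\tilde M$ coarse Gauss–Radau nodes), $\tilde{\mathbf{A}}\in\mathbb{C}^{\tilde N\times\tilde N}$, $\tilde{\mathbf{N}}_{\tilde M}\in\mathbb{R}^{\tilde M\times\tilde M}$ with ones in its last column and zeros elsewhere, $\tilde{\mathbf{H}}=\tilde{\mathbf{N}}_{\tilde M}\otimes\mathbf{I}_{\tilde N}$, and coarse approximative block Gauss–Seidel preconditioner $\tilde{\mathbf{P}}=\mathbf{I}_{L\tilde M\tilde N}-\mu\,\mathbf{I}_L\otimes\tilde{\mathbf{Q}}_\Delta\otimes\tilde{\mathbf{A}}-\mathbf{E}\otimes\tilde{\mathbf{H}}$. Both $\hat{\mathbf{P}}$ and $\tilde{\mathbf{P}}$ are assumed invertible. Restriction and interpolation are $\mathbf{T}_F^C=\mathbf{I}_L\otimes\mathbf{T}_{F,Q}^C\otimes\mathbf{T}_{F,A}^C\in\mathbb{R}^{L\tilde M\tilde N\times LMN}$ and $\mathbf{T}_C^F=\mathbf{I}_L\otimes\mathbf{T}_{C,Q}^F\otimes\mathbf{T}_{C,A}^F\in\mathbb{R}^{LMN\times L\tilde M\tilde N}$ (no coarsening across time steps), where the restriction satisfies $(\mathbf{E}\otimes\tilde{\mathbf{H}})\mathbf{T}_F^C=\mathbf{T}_F^C(\mathbf{E}\otimes\mathbf{H})$. Smoother iteration matrix $\mathbf{T}_S(\mu)=\mathbf{I}_{LMN}-\hat{\mathbf{P}}^{-1}\mathbf{C}$,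 coarse-grid correction $\mathbf{T}_{\mathrm{CGC}}(\mu)=\mathbf{I}_{LMN}-\mathbf{T}_C^F\tilde{\mathbf{P}}^{-1}\mathbf{T}_F^C\mathbf{C}$, and PFASST iteration matrix $\mathbf{T}_{\mathrm{PFASST}}(\mu)=\mathbf{T}_S(\mu)\,\mathbf{T}_{\mathrm{CGC}}(\mu)$. *)

From HB Require Import structures.
From mathcomp Require Import all_boot all_order all_algebra.
From mathcomp Require Import all_classical all_reals all_analysis.
From mathcomp Require Import complex mxtens.
Set Implicit Arguments. Unset Strict Implicit. Unset Printing Implicit Defensive.
Import Order.TTheory GRing.Theory Num.Theory.
Local Open Scope ring_scope.

(* Right Gauss--Radau nodes on [0,1]: 0 < tau_1 < ... < tau_M = 1, and the
   interpolatory quadrature on these nodes is exact for all polynomials of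
   degree <= 2M-2 (integral of t^k over [0,1] is 1/(k+1)). *)
Definition right_radau (R : realType) (M : nat) (tau : 'I_M -> R) : Prop :=
  [/\ (forall i j : 'I_M, (i < j)%N -> tau i < tau j),
      (forall i : 'I_M, 0 < tau i /\ tau i <= 1),
      (exists i : 'I_M, tau i = 1) &
      exists w : 'I_M -> R, forall k : nat, (k <= 2 * M - 2)%N ->
        \sum_(j < M) w j * tau j ^+ k = (k.+1%:R)^-1 ].

Definition lagrange (R : fieldType) (M : nat) (tau : 'I_M -> R) (j : 'I_M)
  : {poly R} :=
  \prod_(k < M | k != j) (('X - (tau k)%:P) * ((tau j - tau k)^-1)%:P).

Definition poly_int0 (R : fieldType) (p : {poly R}) (x : R) : R :=
  \sum_(i < size p) p`_i * x ^+ i.+1 / (i.+1)%:R.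

Definition collocQ (R : fieldType) (M : nat) (tau : 'I_M -> R) : 'M[R]_M :=
  \matrix_(m < M, j < M) poly_int0 (lagrange tau j) (tau m).

Definition rmx (R : rcfType) (m n : nat) (X : 'M[R]_(m, n)) : 'M[R[i]]_(m, n) :=
  map_mx (real_complex R) X.

Definition shiftE (R : rcfType) (L : nat) : 'M[R[i]]_L :=
  \matrix_(i < L, j < L) ((i == j.+1 :> nat)%:R).

Definition lastcol (R : rcfType) (M : nat) : 'M[R[i]]_M :=
  \matrix_(i < M, j < M) ((j == M.-1 :> nat)%:R).

Definition Hmat (R : rcfType) (M N : nat) : 'M[R[i]]_(M * N) :=
  lastcol R M *t (1%:M : 'M[R[i]]_N).

(* E (x) H, viewed with the index ordering (L*M)*N *)
Definition EH (R : rcfType) (L M N : nat) : 'M[R[i]]_(L * M * N) :=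
  castmx (mulnA L M N, mulnA L M N) (shiftE R L *t Hmat R M N).

Definition kronI (R : rcfType) (L m n p q : nat)
  (X : 'M[R[i]]_(m, n)) (Y : 'M[R[i]]_(p, q)) : 'M[R[i]]_(L * m * p, L * n * q) :=
  ((1%:M : 'M[R[i]]_L) *t X) *t Y.

Definition Ccoll (R : realType) (L M N : nat) (tau : 'I_M -> R) (A : 'M[R[i]]_N)
  (mu : R) : 'M[R[i]]_(L * M * N) :=
  1%:M - (real_complex R mu) *: kronI L (rmx (collocQ tau)) A - EH R L M N.

Definition Phat (R : realType) (L M N : nat) (QD : 'M[R]_M) (A : 'M[R[i]]_N)
  (mu : R) : 'M[R[i]]_(L * M * N) :=
  1%:M - (real_complex R mu) *: kronI L (rmx QD) A.

Definition Ptil (R : realType) (L Mt Nt : nat) (QDt : 'M[R]_Mt) (At : 'M[R[i]]_Nt)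
  (mu : R) : 'M[R[i]]_(L * Mt * Nt) :=
  1%:M - (real_complex R mu) *: kronI L (rmx QDt) At - EH R L Mt Nt.

Definition TFC (R : realType) (L M N Mt Nt : nat)
  (TQ : 'M[R]_(Mt, M)) (TA : 'M[R]_(Nt, N)) : 'M[R[i]]_(L * Mt * Nt, L * M * N) :=
  kronI L (rmx TQ) (rmx TA).

Definition TCF (R : realType) (L M N Mt Nt : nat)
  (TQ : 'M[R]_(M, Mt)) (TA : 'M[R]_(N, Nt)) : 'M[R[i]]_(L * M * N, L * Mt * Nt) :=
  kronI L (rmx TQ) (rmx TA).

Definition TPFASST (R : realType) (L M N Mt Nt : nat) (tau : 'I_M -> R)
  (QD : 'M[R]_M) (A : 'M[R[i]]_N) (QDt : 'M[R]_Mt) (At : 'M[R[i]]_Nt)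
  (TQfc : 'M[R]_(Mt, M)) (TAfc : 'M[R]_(Nt, N))
  (TQcf : 'M[R]_(M, Mt)) (TAcf : 'M[R]_(N, Nt)) (mu : R) : 'M[R[i]]_(L * M * N) :=
  let C := Ccoll L tau A mu in
  let TS := 1%:M - invmx (Phat L QD A mu) *m C in
  let TCGC := 1%:M - TCF L TQcf TAcf *m invmx (Ptil L QDt At mu)
                       *m TFC L TQfc TAfc *m C in
  TS *m TCGC.

Definition spectral_radius (R : realType) (n : nat) (T : 'M[R[i]]_n) : R :=
  sup [set Normc.normc l | l in [set l | eigenvalue T l]]%classic.

From HB Require Import structures.
From mathcomp Require Import all_boot all_order all_algebra.
From mathcomp Require Import all_classical all_reals all_analysis.
From mathcomp Require Import complex mxtens.
From mathcomp Require Import ring lra zify.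
Set Implicit Arguments. Unset Strict Implicit. Unset Printing Implicit Defensive.
Import Order.TTheory GRing.Theory Num.Theory.
Local Open Scope ring_scope.

(* At mu = 0 the PFASST iteration matrix reduces to T0 = E_H (I - T_C^F T_F^C).
   E shifts every block down by one time step while all other factors are
   block diagonal in time, so T0 is nilpotent of order L.  For small mu both
   preconditioners have uniformly bounded inverses, hence
   T_PFASST(mu) = T0 + mu Z(mu) with Z(mu) bounded, and
   |(T0 + mu Z)^L| = |(T0 + mu Z)^L - T0^L| = O(mu).  Every eigenvalue lambda
   therefore satisfies |lambda|^L = O(mu). *)

Section EntrywiseNorm.
Variable R : rcfType.
Local Notation normc := (@Normc.normc R).
Implicit Types (m n p : nat).

Lemma normc_ge0 (z : R[i]) : 0 <= normc z.
Proof. exact: (@normr_ge0 _ (Rcomplex R)). Qed.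

Lemma normc_real (r : R) : normc (real_complex R r) = `|r|.
Proof. by rewrite /Normc.normc /= expr0n addr0 sqrtr_sqr. Qed.

Lemma normcX (z : R[i]) k : normc (z ^+ k) = normc z ^+ k.
Proof.
elim: k => [|k IHk]; first by rewrite !expr0 Normc.normc1.
by rewrite !exprS Normc.normcM IHk.
Qed.

Definition l1mx m n (X : 'M[R[i]]_(m, n)) : R := \sum_i \sum_j normc (X i j).

Lemma l1mx_ge0 m n (X : 'M[R[i]]_(m, n)) : 0 <= l1mx X.
Proof. by do 2![apply: sumr_ge0 => ? _]; apply: normc_ge0. Qed.

Lemma l1mx0 m n : l1mx (0 : 'M[R[i]]_(m, n)) = 0.
Proof. by do 2![apply: big1 => ? _]; rewrite mxE Normc.normc0. Qed.

Lemma ler_l1mxD m n (X Y : 'M[R[i]]_(m, n)) : l1mx (X + Y) <= l1mx X + l1mx Y.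
Proof.
rewrite /l1mx -big_split; apply: ler_sum => i _.
rewrite -big_split; apply: ler_sum => j _; rewrite mxE.
exact: (@ler_normD _ (Rcomplex R)).
Qed.

Lemma l1mxN m n (X : 'M[R[i]]_(m, n)) : l1mx (- X) = l1mx X.
Proof. by do 2![apply: eq_bigr => ? _]; rewrite mxE; apply: normcN. Qed.

Lemma l1mxZ m n a (X : 'M[R[i]]_(m, n)) : l1mx (a *: X) = normc a * l1mx X.
Proof.
rewrite /l1mx mulr_sumr; apply: eq_bigr => i _; rewrite mulr_sumr.
by apply: eq_bigr => j _; rewrite mxE Normc.normcM.
Qed.

Lemma l1mx_row_le m n (X : 'M[R[i]]_(m, n)) i : \sum_j normc (X i j) <= l1mx X.
Proof.
rewrite /l1mx (bigD1 i) //= lerDl.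
by do 2![apply: sumr_ge0 => ? _]; apply: normc_ge0.
Qed.

Lemma ler_l1mxM m n p (X : 'M[R[i]]_(m, n)) (Y : 'M[R[i]]_(n, p)) :
  l1mx (X *m Y) <= l1mx X * l1mx Y.
Proof.
rewrite /l1mx mulr_suml; apply: ler_sum => i _.
apply: (@le_trans _ _ (\sum_j \sum_l normc (X i l) * normc (Y l j))).
  apply: ler_sum => j _; rewrite mxE.
  apply: le_trans (@ler_norm_sum _ (Rcomplex R) _ _ _ _) _.
  by apply: ler_sum => l _; rewrite -Normc.normcM; apply: lexx.
rewrite exchange_big /= mulr_suml; apply: ler_sum => l _.
by rewrite -mulr_sumr ler_wpM2l ?normc_ge0 ?l1mx_row_le.
Qed.

Lemma l1mx_eq0 m n (X : 'M[R[i]]_(m, n)) : l1mx X = 0 -> X = 0.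
Proof.
move=> X0; apply/matrixP => i j; rewrite mxE; apply: Normc.eq0_normc.
apply/eqP; rewrite eq_le normc_ge0 andbT -X0.
apply: le_trans (l1mx_row_le X i); rewrite (bigD1 j) //= lerDl.
by apply: sumr_ge0 => ? _; apply: normc_ge0.
Qed.

Section Bounds.
Variables (m n p : nat) (x y : R).

Lemma l1mxD_le (X Y : 'M[R[i]]_(m, n)) :
  l1mx X <= x -> l1mx Y <= y -> l1mx (X + Y) <= x + y.
Proof. by move=> Xx Yy; apply: le_trans (ler_l1mxD X Y) (lerD Xx Yy). Qed.

Lemma l1mxB_le (X Y : 'M[R[i]]_(m, n)) :
  l1mx X <= x -> l1mx Y <= y -> l1mx (X - Y) <= x + y.
Proof. by move=> Xx Yy; apply: l1mxD_le; rewrite ?l1mxN. Qed.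

Lemma l1mxM_le (X : 'M[R[i]]_(m, n)) (Y : 'M[R[i]]_(n, p)) :
  l1mx X <= x -> l1mx Y <= y -> l1mx (X *m Y) <= x * y.
Proof.
move=> Xx Yy; apply: le_trans (ler_l1mxM X Y) _.
by apply: ler_pM; rewrite ?l1mx_ge0.
Qed.

Lemma l1mxZ_le a (X : 'M[R[i]]_(m, n)) :
  normc a <= x -> l1mx X <= y -> l1mx (a *: X) <= x * y.
Proof.
by move=> ax Xy; rewrite l1mxZ; apply: ler_pM; rewrite ?normc_ge0 ?l1mx_ge0.
Qed.

End Bounds.

Lemma l1mx_fixpoint_le m n (X B : 'M[R[i]]_(m, n)) (K : 'M[R[i]]_n) a :
  X = B + a *: (X *m K) -> normc a * l1mx K <= 2^-1 -> l1mx X <= 2 * l1mx B.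
Proof.
move=> XE aK; have : l1mx X <= l1mx B + normc a * (l1mx X * l1mx K).
  by rewrite {1}XE; apply: l1mxD_le (lexx _) (l1mxZ_le (lexx _) (ler_l1mxM _ _)).
have : 0 <= l1mx X * (2^-1 - normc a * l1mx K).
  by rewrite mulr_ge0 ?l1mx_ge0 ?subr_ge0.
lra.
Qed.

Lemma l1mx_exp_le n (X : 'M[R[i]]_n) q k :
  l1mx X <= q -> l1mx (X ^+ k) <= l1mx (1%:M : 'M[R[i]]_n) * q ^+ k.
Proof.
move=> Xq; elim: k => [|k IHk]; first by rewrite !expr0 mulr1.
by rewrite !exprSr mulrA; apply: l1mxM_le.
Qed.

Lemma l1mx_exp_perturb n (X D : 'M[R[i]]_n) q k :
  l1mx X <= q -> l1mx (X + D) <= q ->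
  l1mx ((X + D) ^+ k - X ^+ k)
    <= k%:R * l1mx D * l1mx (1%:M : 'M[R[i]]_n) * q ^+ k.-1.
Proof.
move=> Xq XDq; elim: k => [|k IHk]; first by rewrite !expr0 subrr l1mx0 !mul0r.
have -> : (X + D) ^+ k.+1 - X ^+ k.+1
    = ((X + D) ^+ k - X ^+ k) * (X + D) + X ^+ k * D.
  by rewrite !exprSr mulrBl [X ^+ k * (X + D)]mulrDr opprD addrA subrK.
have Xkq := l1mx_exp_le k Xq.
apply: le_trans (l1mxD_le (l1mxM_le IHk XDq) (l1mxM_le Xkq (lexx _))) _.
rewrite -natr1 le_eqVlt; apply/orP; left; apply/eqP.
by case: k {IHk Xkq} => [|k]; rewrite /= ?exprSr; ring.
Qed.

Lemma eigenvalue_normc_exp_le n (T : 'M[R[i]]_n) l k b :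
  eigenvalue T l -> l1mx (T ^+ k) <= b -> normc l ^+ k <= b.
Proof.
move=> /eigenvalueP[v vT v_neq0] Tb.
have vTk : v *m T ^+ k = l ^+ k *: v.
  elim: k {Tb} => [|k IHk]; first by rewrite !expr0 mulmx1 scale1r.
  by rewrite exprSr -mulmxE mulmxA IHk -scalemxAl vT scalerA -exprSr.
have v_gt0 : 0 < l1mx v.
  by rewrite lt_def l1mx_ge0 andbT; apply: contraNneq v_neq0 => /l1mx_eq0 ->.
rewrite -(ler_pM2l v_gt0) -normcX mulrC -l1mxZ -vTk.
by apply: le_trans (ler_l1mxM _ _) _; rewrite ler_wpM2l ?l1mx_ge0.
Qed.

End EntrywiseNorm.

Lemma le_powRV_of_exprn_le (R : realType) (x b : R) k :
  (0 < k)%N -> 0 <= x -> x ^+ k <= b -> x <= b `^ k%:R^-1.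
Proof.
move=> k_gt0 x_ge0 xb.
have k_neq0 : (k%:R : R) != 0 by rewrite pnatr_eq0 -lt0n.
apply: (@le_trans _ _ ((x ^+ k) `^ k%:R^-1)).
  by rewrite -powR_mulrn // -powRrM mulfV // powRr1.
apply: ge0_ler_powR; rewrite ?invr_ge0 ?ler0n ?nnegrE ?exprn_ge0 //.
exact: le_trans (exprn_ge0 k x_ge0) xb.
Qed.

Lemma spectral_radius_le (R : realType) n (T : 'M[R[i]]_n) r :
  0 <= r -> (forall l, eigenvalue T l -> Normc.normc l <= r) ->
  spectral_radius T <= r.
Proof.
move=> r_ge0 Tr; rewrite /spectral_radius.
have [[l0 Tl0]|no_eig] := pselect (exists l, eigenvalue T l).
  apply: ge_sup; first by exists (Normc.normc l0); exists l0.
  by move=> _ [l Tl <-]; apply: Tr.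
rewrite (_ : [set _ | l in _]%classic = set0) ?sup0 //.
by apply/seteqP; split => // x [l Tl _]; apply: no_eig; exists l.
Qed.

Lemma spectral_radius_nilpotent_add (R : realType) n k (X D : 'M[R[i]]_n) q d :
  (0 < k)%N -> X ^+ k = 0 -> l1mx X <= q -> l1mx (X + D) <= q -> l1mx D <= d ->
  spectral_radius (X + D)
    <= (k%:R * d * l1mx (1%:M : 'M[R[i]]_n) * q ^+ k.-1) `^ k%:R^-1.
Proof.
move=> k_gt0 Xk0 Xq XDq Dd; apply: spectral_radius_le => [|l XDl].
  exact: powR_ge0.
apply: le_powRV_of_exprn_le => //; first exact: normc_ge0.
apply: (eigenvalue_normc_exp_le XDl).
have -> : (X + D) ^+ k = (X + D) ^+ k - X ^+ k by rewrite Xk0 subr0.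
apply: le_trans (l1mx_exp_perturb k Xq XDq) _.
have q_ge0 : 0 <= q := le_trans (l1mx_ge0 X) Xq.
by rewrite !ler_wpM2r ?exprn_ge0 ?l1mx_ge0 // ler_wpM2l ?ler0n.
Qed.

Lemma nilpotent_geom_inv (F : pzRingType) (x : F) k :
  x ^+ k = 0 -> (1 - x) * \sum_(i < k) x ^+ i = 1.
Proof. by move=> xk0; rewrite -opprB mulNr -subrX1 xk0 sub0r opprK. Qed.

Section GradedLower.
Variable F : pzRingType.

Definition graded_lower m n (gm : 'I_m -> nat) (gn : 'I_n -> nat) k
    (X : 'M[F]_(m, n)) :=
  forall i j, X i j != 0 -> (gn j + k <= gm i)%N.

Lemma graded_lower_mul m n p (gm : 'I_m -> nat) (gn : 'I_n -> nat)
    (gp : 'I_p -> nat) k1 k2 (X : 'M[F]_(m, n)) (Y : 'M[F]_(n, p)) :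
  graded_lower gm gn k1 X -> graded_lower gn gp k2 Y ->
  graded_lower gm gp (k1 + k2) (X *m Y).
Proof.
move=> hX hY i j; rewrite mxE => XY_neq0.
have [l XYl_neq0] : exists l, X i l * Y l j != 0.
  apply/existsP; apply: contraNT XY_neq0; rewrite negb_exists => /forallP XY0.
  by apply/eqP/big1 => l _; apply/eqP; have := XY0 l; rewrite negbK.
have /hX : X i l != 0 by apply: contraNneq XYl_neq0 => ->; rewrite mul0r.
have /hY : Y l j != 0 by apply: contraNneq XYl_neq0 => ->; rewrite mulr0.
lia.
Qed.

Lemma graded_lowerB m n (gm : 'I_m -> nat) (gn : 'I_n -> nat) k
    (X Y : 'M[F]_(m, n)) :
  graded_lower gm gn k X -> graded_lower gm gn k Y ->
  graded_lower gm gn k (X - Y).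
Proof.
move=> hX hY i j; rewrite !mxE; have [Xij0|/hX //] := eqVneq (X i j) 0.
by rewrite Xij0 sub0r oppr_eq0; apply: hY.
Qed.

Lemma graded_lower1 n (g : 'I_n -> nat) : graded_lower g g 0 (1%:M : 'M[F]_n).
Proof.
move=> i j; rewrite mxE addn0; have [->|] := eqVneq i j => //.
by rewrite mulr0n eqxx.
Qed.

Lemma graded_lower_exp n (g : 'I_n -> nat) k (X : 'M[F]_n) :
  graded_lower g g 1 X -> graded_lower g g k (X ^+ k).
Proof.
move=> hX; elim: k => [|k IHk]; first exact: graded_lower1.
by rewrite exprSr -addn1; apply: graded_lower_mul IHk hX.
Qed.

Lemma graded_lower_eq0 m n (gm : 'I_m -> nat) (gn : 'I_n -> nat) k
    (X : 'M[F]_(m, n)) :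
  graded_lower gm gn k X -> (forall i, (gm i < k)%N) -> X = 0.
Proof.
move=> hX gm_lt; apply/matrixP => i j; rewrite mxE; apply/eqP.
by apply: contraT => /hX; have := gm_lt i; lia.
Qed.

End GradedLower.

(* Index i of I_L (x) X (x) Y, with X of height m and Y of height p, lies in
   the block row i %/ p %/ m of the time-step decomposition. *)
Definition time_step L m p (i : 'I_(L * m * p)) : nat := i %/ p %/ m.
Arguments time_step {L m p} i.

Lemma time_step_lt L m p (i : 'I_(L * m * p)) :
  (0 < m)%N -> (0 < p)%N -> (time_step i < L)%N.
Proof.
move=> m_gt0 p_gt0; rewrite /time_step -divnMA.
rewrite ltn_divLR ?muln_gt0 ?m_gt0 ?p_gt0 //.
by have := ltn_ord i; lia.
Qed.

Section TimeStepStructure.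
Variables (R : rcfType) (L : nat).

Lemma graded_lower_kronI m n p q (X : 'M[R[i]]_(m, n)) (Y : 'M[R[i]]_(p, q)) :
  graded_lower time_step time_step 0 (kronI L X Y).
Proof.
move=> i j; rewrite /kronI !mxE /=.
case: (boolP (Ordinal _ == Ordinal _)) => [/eqP ij|]; last first.
  by rewrite mulr0n !mul0r eqxx.
move=> _; have /= ij' := congr1 (@nat_of_ord _) ij.
by rewrite /time_step ij' addn0.
Qed.

Lemma graded_lower_EH M N : graded_lower time_step time_step 1 (EH R L M N).
Proof.
move=> i j; rewrite /EH castmxE !mxE /=.
case: (boolP (_ == _.+1)) => [/eqP ij|]; last by rewrite mulr0n !mul0r eqxx.
by move=> _; rewrite /time_step -!divnMA (mulnC N M) ij addn1.
Qed.

Lemma EH_nilpotent M N : (0 < M)%N -> (0 < N)%N -> EH R L M N ^+ L = 0.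
Proof.
move=> M_gt0 N_gt0; apply: (@graded_lower_eq0 _ _ _ _ _ L).
  exact/graded_lower_exp/graded_lower_EH.
by move=> i; apply: time_step_lt.
Qed.

End TimeStepStructure.

Section PFASSTAlgebra.
Variable F : comPzRingType.
Implicit Types (a : F).

(* Once every product is written as a single matrix, the identities below
   are linear in the entries, so they follow entrywise by commutative [ring]. *)
Ltac mxring := apply/matrixP => ? ?; rewrite !mxE; ring.

Lemma inv_sub_scale n (X K : 'M[F]_n) a :
  X *m (1%:M - a *: K) = 1%:M -> X = 1%:M + a *: (X *m K).
Proof.
by rewrite mulmxBr mulmx1 -scalemxAr => XK; rewrite -[in RHS]XK; mxring.
Qed.

Lemma smoother_eq n (X K Kq E : 'M[F]_n) a :
  X *m (1%:M - a *: K) = 1%:M ->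
  1%:M - X *m (1%:M - a *: Kq - E) = E + a *: (X *m K *m E + X *m (Kq - K)).
Proof.
move=> XK; have XE := inv_sub_scale XK.
have XEE : X *m E = E + a *: (X *m K *m E).
  by rewrite [in LHS]XE mulmxDl mul1mx -scalemxAl.
rewrite !mulmxBr mulmx1 XEE -scalemxAr [X in 1%:M - (X - _ - _)]XE.
by mxring.
Qed.

Lemma coarse_inv_eq n (Y Kc Ec W : 'M[F]_n) a :
  Y *m (1%:M - a *: Kc - Ec) = 1%:M -> (1%:M - Ec) *m W = 1%:M ->
  Y = W + a *: (Y *m (Kc *m W)).
Proof.
move=> YP EW; have YE : Y *m (1%:M - Ec) = 1%:M + a *: (Y *m Kc).
  by rewrite -[in RHS]YP !mulmxBr -scalemxAr; mxring.
have := congr1 (mulmx^~ W) YE.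
by rewrite -mulmxA EW mulmx1 mulmxDl mul1mx -scalemxAl -mulmxA.
Qed.

Lemma cgc_eq n m (Y Kc Ec : 'M[F]_m) (Kq Ef : 'M[F]_n)
    (Ip : 'M[F]_(n, m)) (Rs : 'M[F]_(m, n)) a :
  Y *m (1%:M - a *: Kc - Ec) = 1%:M -> Ec *m Rs = Rs *m Ef ->
  1%:M - Ip *m Y *m Rs *m (1%:M - a *: Kq - Ef) =
  (1%:M - Ip *m Rs) - a *: (Ip *m Y *m (Kc *m Rs - Rs *m Kq)).
Proof.
move=> YP ERs.
have RsC : Rs *m (1%:M - a *: Kq - Ef) =
    (1%:M - a *: Kc - Ec) *m Rs + a *: (Kc *m Rs - Rs *m Kq).
  by rewrite !mulmxBr !mulmxBl mulmx1 mul1mx -ERs -scalemxAr -scalemxAl; mxring.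
rewrite -!mulmxA RsC; set S := Kc *m Rs - Rs *m Kq.
rewrite mulmxDr (mulmxA Y) YP mul1mx -scalemxAr mulmxDr -scalemxAr.
by mxring.
Qed.

Lemma product_eq n (E G0 S Cg : 'M[F]_n) a :
  (E + a *: S) *m (G0 - a *: Cg) =
  E *m G0 + a *: (S *m G0 - E *m Cg - a *: (S *m Cg)).
Proof.
by rewrite mulmxDl !mulmxBr -!scalemxAl -!scalemxAr scalerA; mxring.
Qed.

End PFASSTAlgebra.

Section PFASSTSpectralBound.
Variables (R : realType) (L M N Mt Nt : nat) (tau : 'I_M -> R).
Variables (QD : 'M[R]_M) (A : 'M[R[i]]_N) (QDt : 'M[R]_Mt) (At : 'M[R[i]]_Nt).
Variables (TQfc : 'M[R]_(Mt, M)) (TAfc : 'M[R]_(Nt, N)).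
Variables (TQcf : 'M[R]_(M, Mt)) (TAcf : 'M[R]_(N, Nt)).
Hypotheses (L_gt0 : (0 < L)%N) (M_gt0 : (0 < M)%N) (N_gt0 : (0 < N)%N).
Hypotheses (Mt_gt0 : (0 < Mt)%N) (Nt_gt0 : (0 < Nt)%N).
Hypothesis EH_TFC :
  EH R L Mt Nt *m TFC L TQfc TAfc = TFC L TQfc TAfc *m EH R L M N.

Local Notation "x %:C" := (real_complex R x).

Let Kf := kronI L (rmx QD) A.
Let Kq := kronI L (rmx (collocQ tau)) A.
Let Kc := kronI L (rmx QDt) At.
Let Ef := EH R L M N.
Let Ec := EH R L Mt Nt.
Let Rs := TFC L TQfc TAfc.
Let Ip := TCF L TQcf TAcf.
Let G0 := 1%:M - Ip *m Rs.
Let T0 := Ef *m G0.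
Let W := \sum_(k < L) Ec ^+ k.

Let Xf mu := invmx (Phat L QD A mu).
Let Yc mu := invmx (Ptil L QDt At mu).
(* T_S(mu) = Ef + mu S(mu) and T_CGC(mu) = G0 - mu Cg(mu), see [smoother_eq]
   and [cgc_eq]. *)
Let S mu := Xf mu *m Kf *m Ef + Xf mu *m (Kq - Kf).
Let Cg mu := Ip *m Yc mu *m (Kc *m Rs - Rs *m Kq).
Let Z mu := S mu *m G0 - Ef *m Cg mu - mu%:C *: (S mu *m Cg mu).

Lemma T0_nilpotent : T0 ^+ L = 0.
Proof.
have G0_lower : graded_lower time_step time_step 0 G0.
  apply: graded_lowerB; first exact: graded_lower1.
  by rewrite -[0%N]/(0 + 0)%N; apply: graded_lower_mul; apply: graded_lower_kronI.
apply: (@graded_lower_eq0 _ _ _ time_step time_step L); last first.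
  by move=> i; apply: time_step_lt.
apply/graded_lower_exp; rewrite -[1%N]addn0.
exact: graded_lower_mul (@graded_lower_EH _ _ _ _) G0_lower.
Qed.

Lemma TPFASST_decomposition mu :
  Phat L QD A mu \in unitmx -> Ptil L QDt At mu \in unitmx ->
  TPFASST L tau QD A QDt At TQfc TAfc TQcf TAcf mu = T0 + mu%:C *: Z mu.
Proof.
move=> Pf Pc; rewrite /TPFASST /Ccoll.
rewrite (smoother_eq _ _ (mulVmx Pf)) (cgc_eq _ _ (mulVmx Pc) EH_TFC).
exact: product_eq.
Qed.

Let e := l1mx (1%:M : 'M[R[i]]_(L * M * N)).
Let mu0 := (2 * (l1mx Kf + l1mx (Kc *m W) + 1))^-1.
Let sb := 2 * e * (l1mx Kf * l1mx Ef + (l1mx Kq + l1mx Kf)).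
Let cb := l1mx Ip * (2 * l1mx W) * (l1mx Kc * l1mx Rs + l1mx Rs * l1mx Kq).
Let zb := sb * l1mx G0 + l1mx Ef * cb + sb * cb.

Lemma mu0_gt0 : 0 < mu0.
Proof. by rewrite invr_gt0 mulr_gt0 ?ltr_wpDl ?addr_ge0 ?l1mx_ge0. Qed.

Lemma small_mu mu : 0 < mu < mu0 ->
  [/\ mu * l1mx Kf <= 2^-1, mu * l1mx (Kc *m W) <= 2^-1 & mu <= 1].
Proof.
case/andP=> mu_gt0 mu_lt.
have mua : 0 <= mu * l1mx Kf by rewrite mulr_ge0 ?l1mx_ge0 ?ltW.
have mub : 0 <= mu * l1mx (Kc *m W) by rewrite mulr_ge0 ?l1mx_ge0 ?ltW.
have P_gt0 : 0 < 2 * (l1mx Kf + l1mx (Kc *m W) + 1).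
  by rewrite mulr_gt0 // ltr_wpDl ?addr_ge0 ?l1mx_ge0.
have : mu * (2 * (l1mx Kf + l1mx (Kc *m W) + 1))
       < mu0 * (2 * (l1mx Kf + l1mx (Kc *m W) + 1)) by rewrite ltr_pM2r.
rewrite /mu0 mulVf ?lt0r_neq0 //.
by split; lra.
Qed.

Lemma W_inv : (1%:M - Ec) *m W = 1%:M.
Proof. by rewrite mulmxE nilpotent_geom_inv // EH_nilpotent. Qed.

Lemma fine_inv_bound mu : 0 < mu < mu0 -> Phat L QD A mu \in unitmx ->
  l1mx (Xf mu) <= 2 * e.
Proof.
move=> /[dup] /andP[mu_gt0 _] /small_mu[muKf _ _] Pf.
apply: (l1mx_fixpoint_le (a := mu%:C)); first exact: inv_sub_scale (mulVmx Pf).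
by rewrite normc_real (ger0_norm (ltW mu_gt0)).
Qed.

Lemma coarse_inv_bound mu : 0 < mu < mu0 -> Ptil L QDt At mu \in unitmx ->
  l1mx (Yc mu) <= 2 * l1mx W.
Proof.
move=> /[dup] /andP[mu_gt0 _] /small_mu[_ muKcW _] Pc.
apply: (l1mx_fixpoint_le (a := mu%:C)).
  exact: coarse_inv_eq (mulVmx Pc) W_inv.
by rewrite normc_real (ger0_norm (ltW mu_gt0)).
Qed.

Lemma Z_bound mu : 0 < mu < mu0 ->
  Phat L QD A mu \in unitmx -> Ptil L QDt At mu \in unitmx -> l1mx (Z mu) <= zb.
Proof.
move=> mu_bd Pf Pc; have [_ _ mu_le1] := small_mu mu_bd.
have Sb : l1mx (S mu) <= sb.
  rewrite /sb mulrDr mulrA; have Xb := fine_inv_bound mu_bd Pf.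
  apply: l1mxD_le; first exact: l1mxM_le (l1mxM_le Xb (lexx _)) (lexx _).
  exact: l1mxM_le Xb (l1mxB_le (lexx _) (lexx _)).
have Cgb : l1mx (Cg mu) <= cb.
  apply: l1mxM_le (l1mxM_le (lexx _) (coarse_inv_bound mu_bd Pc)) _.
  exact: l1mxB_le (l1mxM_le (lexx _) (lexx _)) (l1mxM_le (lexx _) (lexx _)).
apply: l1mxB_le.
  exact: l1mxB_le (l1mxM_le Sb (lexx _)) (l1mxM_le (lexx _) Cgb).
rewrite -[sb * cb]mul1r; apply: l1mxZ_le (l1mxM_le Sb Cgb).
by case/andP: mu_bd => mu_gt0 _; rewrite normc_real (ger0_norm (ltW mu_gt0)).
Qed.

Lemma pfasst_spectral_bound : exists mu0 c : R, 0 < mu0 /\ 0 < c /\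
  forall mu : R, 0 < mu -> mu < mu0 ->
    Phat L QD A mu \in unitmx -> Ptil L QDt At mu \in unitmx ->
    spectral_radius (TPFASST L tau QD A QDt At TQfc TAfc TQcf TAcf mu)
      <= c * mu `^ (L%:R)^-1.
Proof.
have zb_ge0 : 0 <= zb.
  rewrite /zb /sb /cb.
  by do ?[apply: addr_ge0 | apply: mulr_ge0 | apply: l1mx_ge0].
pose q := l1mx T0 + zb; pose K := L%:R * zb * e * q ^+ L.-1.
have K_ge0 : 0 <= K.
  rewrite /K /q.
  by do ?[apply: addr_ge0 | apply: mulr_ge0 | apply: exprn_ge0 | apply: l1mx_ge0].
exists mu0, (K `^ L%:R^-1 + 1); split; first exact: mu0_gt0.
split=> [|mu mu_gt0 mu_lt Pf Pc]; first by rewrite ltr_wpDl ?powR_ge0.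
have mu_bd : 0 < mu < mu0 by apply/andP.
have [_ _ mu_le1] := small_mu mu_bd.
have Db : l1mx (mu%:C *: Z mu) <= mu * zb.
  apply: l1mxZ_le (Z_bound mu_bd Pf Pc).
  by rewrite normc_real (ger0_norm (ltW mu_gt0)).
have NDq : l1mx (T0 + mu%:C *: Z mu) <= q.
  by apply: l1mxD_le (lexx _) (le_trans Db _); rewrite ler_piMl.
rewrite TPFASST_decomposition //.
apply: le_trans (spectral_radius_nilpotent_add L_gt0 T0_nilpotent _ NDq Db) _.
  by rewrite lerDl.
have -> : L%:R * (mu * zb) * e * q ^+ L.-1 = mu * K by rewrite /K; ring.
rewrite powRM ?(ltW mu_gt0) // mulrC ler_wpM2r ?powR_ge0 //.
by rewrite lerDl.
Qed.

End PFASSTSpectralBound.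

Theorem theorem2 (R : realType) (L M N Mt Nt : nat) (tau : 'I_M -> R)
  (QD : 'M[R]_M) (A : 'M[R[i]]_N) (QDt : 'M[R]_Mt) (At : 'M[R[i]]_Nt)
  (TQfc : 'M[R]_(Mt, M)) (TAfc : 'M[R]_(Nt, N))
  (TQcf : 'M[R]_(M, Mt)) (TAcf : 'M[R]_(N, Nt)) :
  (0 < L)%N -> (0 < M)%N -> (0 < N)%N ->
  (0 < Mt)%N -> (Mt <= M)%N -> (0 < Nt)%N -> (Nt <= N)%N ->
  right_radau tau ->
  is_trig_mx QD -> is_trig_mx QDt ->
  EH R L Mt Nt *m TFC L TQfc TAfc = TFC L TQfc TAfc *m EH R L M N ->
  exists mu0 c : R, 0 < mu0 /\ 0 < c /\
    forall mu : R, 0 < mu -> mu < mu0 ->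
      Phat L QD A mu \in unitmx -> Ptil L QDt At mu \in unitmx ->
      spectral_radius
        (TPFASST L tau QD A QDt At TQfc TAfc TQcf TAcf mu)
        <= c * mu `^ (L%:R)^-1.
Proof.
move=> L_gt0 M_gt0 N_gt0 Mt_gt0 _ Nt_gt0 _ _ _ _ EH_TFC.
exact: pfasst_spectral_bound.
Qed.
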